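(* Let $Q$ and $P$ be probability measures on the Borel $\sigma$-algebra of $\mathbb{R}$ with $P \gg Q$, both having densities, such that $r = dQ/dP$ is unimodal and $\sup_{x\in\mathbb{R}} r(x) < \infty$. Let $\Phi$ be the CDF of $P$ and define the measures $P' = P\circ\Phi^{-1}$ and $Q' = Q\circ \Phi^{-1}$ on $[0,1]$ (i.e. $P'(A) = P(\Phi^{-1}(A))$, $Q'(A) = Q(\Phi^{-1}(A))$). Then $P'$ is the uniform measure on $[0,1]$, the Radon–Nikodym derivative $dQ'/dP'$ is unimodal, and $$\log \sup_{z\in[0,1]} \frac{dQ'}{dP'}(z) = \log\sup_{x\in\mathbb{R}} \frac{dQ}{dP}(x).$$
   Context: A function $f$ on an interval is unimodal if there is a point $x^*$ such that $f$ is non-decreasing to the left of $x^*$ and non-increasing to the right of $x^*$. *)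

From HB Require Import structures.
From mathcomp Require Import all_boot all_order all_algebra.
From mathcomp Require Import all_classical all_reals all_analysis.
From mathcomp Require Import measurable_realfun.
Set Implicit Arguments. Unset Strict Implicit. Unset Printing Implicit Defensive.
Import Order.TTheory GRing.Theory Num.Theory.
Local Open Scope classical_set_scope.
Local Open Scope ring_scope.

Definition unimodal (R : realType) (D : set R) (f : R -> R) : Prop :=
  exists2 m, D m &
    forall x y, D x -> D y -> x <= y ->
      (y <= m -> f x <= f y) /\ (m <= x -> f y <= f x).

Definition cdfP (R : realType) (P : probability R R) (x : R) : R :=
  fine (P `]-oo, x]%classic).

Lemma cdfP_nondecreasing (R : realType) (P : probability R R) :
  nondecreasing_fun (cdfP P).
Proof.
move=> x y xy; rewrite /cdfP fine_le ?fin_num_measure//.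
apply: le_measure; rewrite ?inE//.
by move=> z /=; rewrite !in_itv/= => /le_trans; apply.
Qed.

Lemma measurable_cdfP (R : realType) (P : probability R R) :
  measurable_fun [set: R] (cdfP P).
Proof. exact: nondecreasing_measurable (cdfP_nondecreasing P). Qed.

HB.instance Definition _ (R : realType) (P : probability R R) :=
  isMeasurableFun.Build _ _ R R (cdfP P) (measurable_cdfP P).

From HB Require Import structures.
From mathcomp Require Import all_boot all_order all_algebra.
From mathcomp Require Import all_classical all_reals all_analysis.
From mathcomp Require Import lra measurable_realfun.
Set Implicit Arguments.
Unset Strict Implicit.
Unset Printing Implicit Defensive.

Import Order.TTheory GRing.Theory Num.Theory.
Import numFieldNormedType.Exports.
Local Open Scope classical_set_scope.
Local Open Scope ring_scope.

(* A measure dominated by Lebesgue measure has no atoms, so its CDF Phi is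
   continuous and maps R onto ]0, 1[; then P (Phi < t) = t for t in [0, 1],
   and since rays determine a probability on R, P o Phi^-1 is uniform.
   The quantile q z = inf {x | z <= Phi x} is nondecreasing and satisfies
   q (Phi x) = x except where Phi is flat to the left of x, a countable union
   of P-null sets, so z |-> r (q z) is a density of Q o Phi^-1 with respect to
   P o Phi^-1.  With m a mode of r, q maps ]0, Phi m] below m and ]Phi m, 1[
   above m, so this density is unimodal with mode Phi m, and its supremum is
   that of r. *)

Lemma dominated_measure_set1 (R : realType) (mu : set R -> \bar R) x :
  mu `<< (@lebesgue_measure R) -> mu [set x] = 0%E.
Proof.
move=> mu_leb.
exact: (null_content_dominatesP _ _).1 mu_leb _ (measurable_set1 x)
  (lebesgue_measure_set1 x).
Qed.

Section probability_rays.
Context (R : realType).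

Lemma eq_probability_itvNy (mu nu : probability R R) :
  (forall t, mu `]-oo, t[%classic = nu `]-oo, t[%classic) ->
  forall A, measurable A -> mu A = nu A.
Proof.
move=> munu A mA.
apply: (@g_sigma_algebra_measure_unique _ _ _ (@RGenInftyO.G R) _
   (fun n => `]-oo, n%:R[%classic)).
- by move=> _ [x ->]; exact: measurable_itv.
- by move=> n; exists n%:R.
- apply/seteqP; split => // z _; exists (Num.Def.truncn z).+1 => //=.
  by rewrite in_itv/= truncnS_gt.
- move=> _ _ [x ->] [y ->]; exists (Num.min x y).
  apply/seteqP; split => z /=; rewrite !in_itv/= lt_min; first by case=> -> ->.
  by case/andP.
- by move=> _ [x ->]; exact: munu.
- by move=> n; apply: (le_lt_trans (probability_le1 _ _)) => //; exact: ltry.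
- by rewrite -[X in X A]RGenInftyO.measurableE.
Qed.

Lemma probability_itvNy_clamp01 (mu : probability R R) :
  (forall t, 0 <= t <= 1 -> mu `]-oo, t[%classic = t%:E) ->
  forall t, mu `]-oo, t[%classic = (Num.min (Num.max t 0) 1)%:E.
Proof.
move=> mu01 t; have [t0|t0] := leP t 0.
  rewrite min_l ?ler01//; apply/eqP; rewrite eq_le measure_ge0 andbT.
  rewrite -(mu01 0) ?lexx ?ler01//.
  by apply: le_measure; rewrite ?inE//; apply: subset_itvl; rewrite bnd_simp.
have [t1|t1] := leP t 1; first by rewrite mu01// ltW.
apply/eqP; rewrite eq_le probability_le1//= -(mu01 1) ?ler01 ?lexx//.
by apply: le_measure; rewrite ?inE//; apply: subset_itvl; rewrite bnd_simp ltW.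
Qed.

Lemma uniform_prob01_itvNy t : 0 <= t <= 1 ->
  uniform_prob ltr01 `]-oo, t[%classic = t%:E :> \bar R.
Proof.
case/andP=> t0 t1; rewrite /uniform_prob integral_uniform_pdf.
have -> : `]-oo, t[%classic `&` `[0, 1]%classic = `[0, t[%classic :> set R.
  apply/seteqP; split => z /=; rewrite !in_itv/=.
    by case=> zt /andP[-> _].
  by case/andP=> -> zt; rewrite zt (le_trans (ltW zt)).
rewrite (eq_integral (fun=> 1%:E)); last first.
  move=> z; rewrite inE/= in_itv/= => /andP[z0 zt].
  by rewrite /uniform_pdf z0 (le_trans (ltW zt))// subr0 invr1.
rewrite integral_cst//= mul1e lebesgue_measure_itv/= lte_fin oppr0 adde0.
by case: ifPn => //; rewrite lt_neqAle t0 andbT negbK => /eqP <-.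
Qed.

Let idR : measurableTypeR R -> R := idfun.
#[local] HB.instance Definition _ :=
  @isMeasurableFun.Build _ _ _ _ idR (@measurable_id _ _ setT).

Lemma eq_uniform_prob01 (mu : probability R R) :
  (forall t, 0 <= t <= 1 -> mu `]-oo, t[%classic = t%:E) ->
  forall A, measurable A -> mu A = uniform_prob ltr01 A.
Proof.
(* [uniform_prob] lives on [measurableTypeR R], which differs from [R] in its
   display; pushing it forward along the identity makes it a probability on
   [R]. *)
move=> mu01 A mA; rewrite -[RHS]/(distribution (uniform_prob ltr01) idR A).
apply: eq_probability_itvNy => // t.
by rewrite !probability_itvNy_clamp01// => s /uniform_prob01_itvNy.
Qed.

End probability_rays.

Section cdfP.
Context (R : realType) (P : probability R R).
Local Notation Phi := (cdfP P).

Lemma cdfPE x : (Phi x)%:E = P `]-oo, x]%classic.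
Proof. by rewrite /cdfP fineK// fin_num_measure. Qed.

Lemma cdfP_ge0 x : 0 <= Phi x.
Proof. by rewrite -lee_fin cdfPE. Qed.

Lemma cdfP_le1 x : Phi x <= 1.
Proof. by rewrite -lee_fin cdfPE probability_le1. Qed.

Lemma cdfPB a b : a <= b -> (Phi b - Phi a)%:E = P `]a, b]%classic.
Proof.
move=> ab; rewrite EFinB !cdfPE.
rewrite (@itv_bndbnd_setU _ _ _ (BRight a)) ?bnd_simp// measureU//.
  by rewrite addeAC subee ?add0e// fin_num_measure.
rewrite -subset0 => z /= []; rewrite !in_itv/= => za /andP[+ _].
by rewrite ltNge za.
Qed.

Lemma cdfP_dist x y :
  `|Phi x - Phi y|%:E = P `]Num.min x y, Num.max x y]%classic.
Proof.
have [xy|yx] := leP x y.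
  by rewrite distrC ger0_norm ?subr_ge0 ?cdfP_nondecreasing// cdfPB.
by rewrite ger0_norm ?subr_ge0 ?cdfP_nondecreasing ?ltW// cdfPB// ltW.
Qed.

Let idR : R -> R := idfun.
#[local] HB.instance Definition _ :=
  @isMeasurableFun.Build _ _ _ _ idR (@measurable_id _ _ setT).

Lemma cvg_cdfPNy0 : Phi x @[x --> -oo] --> (0 : R).
Proof. exact: (fine_cvg (@cvg_cdfNy0 _ _ _ P idR)). Qed.

Lemma cvg_cdfPy1 : Phi x @[x --> +oo] --> (1 : R).
Proof. exact: (fine_cvg (@cvg_cdfy1 _ _ _ P idR)). Qed.

Lemma measurable_cdfP_preimage A : measurable A -> measurable (Phi @^-1` A).
Proof.
by move=> mA; rewrite -[X in measurable X]setTI; exact: measurable_cdfP.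
Qed.

#[local] Hint Extern 0 (measurable (cdfP _ @^-1` _)) =>
  solve [apply: measurable_cdfP_preimage; exact: measurable_itv] : core.

Definition quantile z := inf [set x | z <= Phi x].

Lemma quantile_le z x : 0 < z -> z <= Phi x -> quantile z <= x.
Proof.
move=> z0 zx; apply: ge_inf => //.
have [a [_ ha]] := cvgr_lt 0 cvg_cdfPNy0 z z0.
exists a => y /= zy; rewrite leNgt; apply/negP => /ha; lra.
Qed.

Lemma le_quantile z y :
  z < 1 -> (forall x, z <= Phi x -> y <= x) -> y <= quantile z.
Proof.
move=> z1 zy; apply: lb_le_inf => [|x /zy//].
have [b [_ hb]] := cvgr_gt 1 cvg_cdfPy1 z z1.
by exists (b + 1); apply/ltW/hb; lra.
Qed.

Lemma quantile_nondecreasing z1 z2 :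
  0 < z1 -> z1 <= z2 -> z2 < 1 -> quantile z1 <= quantile z2.
Proof.
move=> z10 z12 z21; apply: le_quantile => // x z2x.
by apply: quantile_le => //; exact: le_trans z2x.
Qed.

Lemma measurable_quantile : measurable_fun (`]0, 1[%classic : set R) quantile.
Proof.
apply: (measurability (@RGenCInfty.G R)) => [|/= _ [_] [y] -> <-].
  exact: RGenCInfty.measurableE.
apply: is_interval_measurable => s t /= [].
rewrite !in_itv/= !andbT => /andP[s0 s1] ys [] /andP[t0 t1] yt.
move=> z /andP[sz zt].
split; first by rewrite in_itv/=; apply/andP; split; lra.
rewrite in_itv/= andbT (le_trans ys)//.
by apply: quantile_nondecreasing => //; lra.
Qed.

Section atomless.
Hypothesis P_atomless : forall x, P [set x] = 0%E.

Lemma cvg_measure_itv_shrink x :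
  P `]x - n.+1%:R^-1, x + n.+1%:R^-1]%classic @[n --> \oo] --> 0%E.
Proof.
rewrite -(P_atomless x).
have -> : [set x] = \bigcap_n `]x - n.+1%:R^-1, x + n.+1%:R^-1]%classic.
  apply/seteqP; split=> [y -> n _|y xy].
    by rewrite /= in_itv/= ltrBlDr ltrDl lerDl invr_gt0 invr_ge0 ltr0Sn ler0n.
  apply/eqP; rewrite eq_le !leNgt; apply/andP.
  split; apply/negP => /ltr_add_invr[n]; have /= := xy n I.
    by rewrite in_itv/= => /andP[]; move: (n.+1%:R^-1) => d; lra.
  by rewrite in_itv/= => /andP[]; move: (n.+1%:R^-1) => d; lra.
apply: nonincreasing_cvg_mu => //.
- by rewrite (le_lt_trans (probability_le1 _ _)) ?ltry.
- exact: bigcap_measurable.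
- move=> m n mn; apply/subsetPset; apply: subset_itv; rewrite bnd_simp.
    by rewrite lerB// lef_pV2 ?posrE// ler_nat.
  by rewrite lerD// lef_pV2 ?posrE// ler_nat.
Qed.

Lemma continuous_cdfP : continuous Phi.
Proof.
move=> x; apply/cvgrPdist_lt => e e0.
have [N _ /(_ N (leqnn N))] :=
  cvgr_lt 0 (fine_cvg (cvg_measure_itv_shrink x)) e e0.
rewrite /= -lte_fin fineK ?fin_num_measure// => PNe.
near=> t; rewrite -lte_fin cdfP_dist; apply: le_lt_trans PNe.
have : `|x - t| < N.+1%:R^-1.
  by near: t; apply: (cvgr_dist_lt id); [exact: cvg_id|].
move: (N.+1%:R^-1) => d; rewrite ltr_norml => /andP[xt1 xt2].
apply: le_measure; rewrite ?inE//; apply: subset_itv; rewrite bnd_simp.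
  by rewrite le_min; apply/andP; split; lra.
by rewrite ge_max; apply/andP; split; lra.
Unshelve. all: by end_near. Qed.

Lemma cdfP_surj t : 0 < t < 1 -> exists x, Phi x = t.
Proof.
case/andP=> t0 t1.
have [a [_ ha]] := cvgr_lt 0 cvg_cdfPNy0 t t0.
have [b [_ hb]] := cvgr_gt 1 cvg_cdfPy1 t t1.
have ta : Phi (a - 1) < t by apply: ha; lra.
have tb : t < Phi (b + 1) by apply: hb; lra.
have ab : a - 1 <= b + 1.
  by rewrite leNgt; apply/negP => /ltW/(cdfP_nondecreasing P); lra.
have [c _ <-] : exists2 c, c \in `[a - 1, b + 1] & Phi c = t.
  apply: IVT => //; first exact: continuous_subspaceT continuous_cdfP.
  by rewrite ge_min le_max (ltW ta) (ltW tb) orbT.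
by exists c.
Qed.

Lemma measure_cdfP_le t : 0 <= t -> (P (Phi @^-1` `]-oo, t]) <= t%:E)%E.
Proof.
move=> t0; apply/lee_addgt0Pr => e e0.
have [te1|te1] := leP 1 (t + e).
  by rewrite (le_trans (probability_le1 _ _)) ?lee_fin.
have [x xE] := cdfP_surj (t := t + e) (ltac:(apply/andP; split; lra)).
rewrite -EFinD -xE cdfPE; apply: le_measure; rewrite ?inE//.
move=> y /=; rewrite !in_itv/= => yt; rewrite leNgt; apply/negP.
by move=> /ltW/(cdfP_nondecreasing P); lra.
Qed.

Lemma measure_cdfP_lt t : 0 <= t <= 1 -> P (Phi @^-1` `]-oo, t[) = t%:E.
Proof.
case/andP=> t0 t1; apply/eqP; rewrite eq_le; apply/andP; split.
  rewrite (le_trans _ (measure_cdfP_le t0))//.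
  apply: le_measure; rewrite ?inE//.
  by move=> y /=; rewrite !in_itv/= => /ltW.
apply/lee_subgt0Pr => e e0.
have [te0|te0] := leP (t - e) 0.
  by rewrite (le_trans _ (measure_ge0 _ _)) ?lee_fin.
have [x xE] := cdfP_surj (t := t - e) (ltac:(apply/andP; split; lra)).
rewrite -EFinB -xE cdfPE; apply: le_measure; rewrite ?inE//.
by move=> y /=; rewrite !in_itv/= => /(cdfP_nondecreasing P) yx; lra.
Qed.

Lemma distribution_cdfP_uniform A : measurable A ->
  distribution P Phi A = uniform_prob ltr01 A.
Proof. by move=> mA; apply: eq_uniform_prob01 => // t /measure_cdfP_lt. Qed.

Lemma negligible_cdfP_preimage1 u : P.-negligible (Phi @^-1` [set u]).
Proof.
apply/negligibleP; first exact: measurable_cdfP_preimage.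
rewrite -[LHS]/(distribution P Phi [set u]) distribution_cdfP_uniform//.
exact/dominated_measure_set1/dominates_uniform_prob.
Qed.

Lemma measure_cdfP_flat s : P (`]s, +oo[ `&` Phi @^-1` `]-oo, Phi s]) = 0%E.
Proof.
set B := _ `&` _.
have mB : measurable B by apply: measurableI.
have : (P B + P `]-oo, s]%classic <= P `]-oo, s]%classic)%E.
  rewrite -measureU//; last first.
    rewrite -subset0 => z [[]]; rewrite /= !in_itv/= andbT => sz _.
    by rewrite leNgt sz.
  rewrite -cdfPE (le_trans _ (measure_cdfP_le (cdfP_ge0 s)))//.
  apply: le_measure; rewrite ?inE//; first exact: measurableU.
  by move=> z [[_ //]|]; rewrite /= !in_itv/= => /(cdfP_nondecreasing P).
rewrite -[X in (_ <= X)%E]add0e leeD2rE ?fin_num_measure// => PB0.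
by apply/eqP; rewrite eq_le PB0 measure_ge0.
Qed.

Lemma negligible_quantile_cdfP_lt :
  P.-negligible [set x | quantile (Phi x) < x].
Proof.
(* If [quantile (Phi x) < x], then [Phi] is constant on [[q, x]] for some
   rational [q]. *)
pose flat (q : option rat) := if q is Some q then
  `]ratr q, +oo[ `&` Phi @^-1` `]-oo, Phi (ratr q)] else set0.
apply: (@negligibleS _ _ _ _ (\bigcup_n flat (unpickle n))).
  move=> x /= /(inf_lt (ex_intro _ x (lexx _)))[e /= xe ex].
  have [q] := rat_in_itvoo ex; rewrite in_itv/= => /andP[eq qx].
  exists (pickle q); first by [].
  rewrite /flat pickleK; split; first by rewrite /mkset in_itv andbT.
  rewrite /preimage/mkset in_itv.
  exact: le_trans xe (cdfP_nondecreasing _ (ltW eq)).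
apply: negligible_bigcup => n; case: (unpickle n) => [q|].
  by apply/negligibleP; [apply: measurableI|exact: measure_cdfP_flat].
exact: negligible_set0.
Qed.

End atomless.
End cdfP.

Section quantile_density.
Context (R : realType) (P : probability R R) (r : R -> R) (m : R).
Local Notation Phi := (cdfP P).
Hypothesis r_ge0 : forall x, 0 <= r x.
Hypothesis r_ub : has_ubound (range r).

(* Changing the value at [Phi m], a null set, to [sup r] makes [Phi m] a mode
   and the supremum equal to that of [r]. *)
Definition quantile_density z :=
  if z == Phi m then sup (range r)
  else if 0 < z < 1 then r (quantile P z) else 0.

Lemma le_sup_range x : r x <= sup (range r).
Proof. by apply: ub_le_sup => //; exists x. Qed.

Lemma quantile_density_mode : quantile_density (Phi m) = sup (range r).
Proof. by rewrite /quantile_density eqxx. Qed.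

Lemma sup_range_ge0 : 0 <= sup (range r).
Proof. exact: le_trans (r_ge0 0) (le_sup_range 0). Qed.

Lemma quantile_density_le_sup z : quantile_density z <= sup (range r).
Proof.
rewrite /quantile_density; case: ifP => // _.
by case: ifP => _; [exact: le_sup_range|exact: sup_range_ge0].
Qed.

Lemma quantile_density_ge0 z : 0 <= quantile_density z.
Proof.
rewrite /quantile_density; case: ifP => _; first exact: sup_range_ge0.
by case: ifP.
Qed.

Lemma measurable_quantile_density :
  measurable_fun [set: R] r -> measurable_fun [set: R] quantile_density.
Proof.
move=> mr.
have meq : measurable_fun [set: R] (fun z => z == Phi m).
  by apply: measurable_fun_eqr => //; exact: measurable_cst.
apply: measurable_fun_if => //.
apply: measurable_fun_if => //; first by apply: meq.
- apply: (measurable_funS (E := setT)) => //.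
  apply: measurable_and; apply: measurable_fun_ltr => //; exact: measurable_cst.
- apply: (measurable_funS (E := `]0, 1[%classic : set R)) => //.
  exact: measurableT_comp mr (measurable_quantile P).
Qed.

Section mode.
Hypothesis r_mode : forall x y, x <= y ->
  (y <= m -> r x <= r y) /\ (m <= x -> r y <= r x).

Lemma quantile_density_homo_le x y :
  0 <= x -> x <= y -> y <= Phi m -> quantile_density x <= quantile_density y.
Proof.
move=> x0 xy ym; have [->|ynm] := eqVneq y (Phi m).
  by rewrite quantile_density_mode quantile_density_le_sup.
have {ynm ym} ym : y < Phi m by rewrite lt_neqAle ynm.
have y1 : y < 1 := lt_le_trans ym (cdfP_le1 P m).
rewrite /quantile_density (lt_eqF ym) (lt_eqF (le_lt_trans xy ym)).
have [x0'|_] := ltP 0 x; last by case: ifP.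
rewrite (le_lt_trans xy y1) (lt_le_trans x0' xy) y1 /=.
have [+ _] := r_mode (quantile_nondecreasing P x0' xy y1); apply.
exact: quantile_le P _ _ (lt_le_trans x0' xy) (ltW ym).
Qed.

Lemma quantile_density_homo_ge x y :
  Phi m <= x -> x <= y -> y <= 1 -> quantile_density y <= quantile_density x.
Proof.
move=> mx xy y1; have [<-|xnm] := eqVneq (Phi m) x.
  by rewrite quantile_density_mode quantile_density_le_sup.
have {xnm mx} mx : Phi m < x by rewrite lt_neqAle xnm.
have x0 : 0 < x := le_lt_trans (cdfP_ge0 P m) mx.
rewrite /quantile_density (gt_eqF mx) (gt_eqF (lt_le_trans mx xy)).
rewrite x0 (lt_le_trans x0 xy).
have [y1'|_] := ltP y 1; last by case: ifP.
rewrite (le_lt_trans xy y1') /=.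
have [_] := r_mode (quantile_nondecreasing P x0 xy y1'); apply.
apply: le_quantile => [|z xz]; first exact: le_lt_trans xy y1'.
rewrite leNgt; apply/negP => /ltW/(cdfP_nondecreasing P); lra.
Qed.

Lemma unimodal_quantile_density : unimodal `[0, 1] quantile_density.
Proof.
exists (Phi m); first by rewrite /= in_itv/= cdfP_ge0 cdfP_le1.
move=> x y; rewrite /= !in_itv/= => /andP[x0 _] /andP[_ y1] xy.
split=> [ym|mx]; first exact: quantile_density_homo_le.
exact: quantile_density_homo_ge.
Qed.

End mode.

Lemma sup_quantile_density :
  sup (quantile_density @` `[0, 1]%classic) = sup (range r).
Proof.
have m01 : `[0, 1]%classic (Phi m) by rewrite /= in_itv/= cdfP_ge0 cdfP_le1.
apply/eqP; rewrite eq_le; apply/andP; split.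
  apply: ge_sup => [|_ [z _ <-]]; last exact: quantile_density_le_sup.
  by exists (quantile_density (Phi m)), (Phi m).
rewrite -quantile_density_mode.
apply: ub_le_sup; last by exists (Phi m).
by exists (sup (range r)) => _ [z _ <-]; exact: quantile_density_le_sup.
Qed.

Section atomless.
Hypothesis P_atomless : forall x, P [set x] = 0%E.

Lemma quantile_density_cdfP_ae :
  {ae P, forall x, quantile_density (Phi x) = r x}.
Proof.
have Nu := negligible_cdfP_preimage1 P_atomless.
apply: (negligibleS _ (negligibleU
  (negligibleU (negligibleU (Nu 0) (Nu 1)) (Nu (Phi m)))
  (negligible_quantile_cdfP_lt P_atomless))).
move=> x /=; rewrite /quantile_density.
have [xm|xm] := eqVneq (Phi x) (Phi m); first by left; right.
have [x0|x0] := leP (Phi x) 0.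
  by left; left; left; apply/eqP; rewrite eq_le x0 cdfP_ge0.
have [x1|x1] := leP 1 (Phi x).
  by left; left; right; apply/eqP; rewrite eq_le x1 cdfP_le1.
move=> qx; right; rewrite /= lt_neqAle quantile_le// andbT.
by apply: contra_notN qx => /eqP ->.
Qed.

Lemma distribution_quantile_density (Q : probability R R) :
  measurable_fun [set: R] r ->
  (forall A, measurable A -> Q A = (\int[P]_(x in A) (r x)%:E)%E) ->
  forall A, measurable A ->
    distribution Q Phi A =
    (\int[distribution P Phi]_(z in A) (quantile_density z)%:E)%E.
Proof.
move=> mr hQ A mA.
have mqd := (measurable_EFinP _ _).2 (measurable_quantile_density mr).
have mPA : measurable (Phi @^-1` A) by exact: measurable_cdfP_preimage.
rewrite ge0_integral_pushforward//; first last.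
- by move=> z _; rewrite lee_fin quantile_density_ge0.
- exact: measurable_funS mqd.
rewrite -[LHS]/(Q (Phi @^-1` A)) hQ//; apply: ae_eq_integral => //.
- by apply/measurable_EFinP; exact: measurable_funS mr.
- exact: measurable_funS (measurableT_comp mqd (measurable_cdfP P)).
- by apply: filterS quantile_density_cdfP_ae => x <-.
Qed.

End atomless.

End quantile_density.

Theorem mainTheorem2 (R : realType) (P Q : probability R R) (r : R -> R) :
  P `<< (@lebesgue_measure R) ->
  Q `<< (@lebesgue_measure R) ->
  Q `<< P ->
  measurable_fun [set: R] r ->
  (forall x, 0 <= r x) ->
  (forall A, measurable A -> Q A = (\int[P]_(x in A) (r x)%:E)%E) ->
  unimodal [set: R] r ->
  has_ubound (range r) ->
  (forall A, measurable A ->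
     distribution P (cdfP P) A = uniform_prob (@ltr01 R) A) /\
  exists r' : R -> R,
    [/\ measurable_fun [set: R] r',
        (forall z, 0 <= r' z),
        (forall A, measurable A ->
           distribution Q (cdfP P) A =
           (\int[distribution P (cdfP P)]_(z in A) (r' z)%:E)%E),
        unimodal `[0, 1]%classic r' &
        ln (sup (r' @` `[0, 1]%classic)) = ln (sup (range r))].
Proof.
move=> /dominated_measure_set1 P_atomless _ _ mr r_ge0 hQ [m _ r_mode] r_ub.
split; first exact: distribution_cdfP_uniform.
exists (quantile_density P r m); split.
- exact: measurable_quantile_density.
- exact: quantile_density_ge0.
- exact: distribution_quantile_density.
- by apply: unimodal_quantile_density r_ge0 r_ub _ => x y; exact: r_mode.
- by rewrite sup_quantile_density.
Qed.
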